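(* For any vertex $i\in[n]$ (fixed as $n\to\infty$), $h_{n,2}(i)/\sqrt{\ln n}\to0$ in probability as $n\to\infty$.
   Context: Kingman's $n$-coalescent $(F_n,\dots,F_1)$: forests on $[n]$, rooted trees with edges directed towards roots; $F_n$ has no edges; for $2\le i\le n$, list the trees of $F_i$ as $T^{(i)}_1,\dots,T^{(i)}_i$ in increasing order of smallest label, choose $\{a_i,b_i\}$ uniformly among 2-subsets of $[i]$ and an independent fair bit $\xi_i$ (independent over $i$), and obtain $F_{i-1}$ by adding an edge between the roots of $T^{(i)}_{a_i},T^{(i)}_{b_i}$ directed towards the root of $T^{(i)}_{\min(a_i,b_i)}$ if $\xi_i=1$, towards the other root otherwise. $h_{F_j}(v)$ is the depth of $v$ in its tree in $F_j$; $h_n(v)=h_{F_1}(v)$; $h_{n,1}(v)=h_{F_{\lfloor\ln^2 n\rfloor}}(v)$; $h_{n,2}(v)=h_n(v)-h_{n,1}(v)$. *)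

(* finite uniform probability over all choice sequences of
   Kingman's n-coalescent, real logarithm/sqrt from Stdlib Reals. *)
From Stdlib Require Import Reals Lra Lia Arith List ZArith.
Import ListNotations.
Open Scope R_scope.

(* A forest on [n] = {1,...,n}: parent map; [None] means root. *)
Definition forest := nat -> option nat.

Definition empty_forest : forest := fun _ => None.

(* root of v (fuel bounded by n, which suffices: depths are < n) *)
Fixpoint root_fuel (F : forest) (fuel v : nat) : nat :=
  match fuel with
  | O => v
  | S f => match F v with None => v | Some p => root_fuel F f p end
  end.

Fixpoint depth_fuel (F : forest) (fuel v : nat) : nat :=
  match fuel with
  | O => O
  | S f => match F v with None => O | Some p => S (depth_fuel F f p) end
  end.

Definition depth (n : nat) (F : forest) (v : nat) : nat := depth_fuel F n v.

Definition undup_first (l : list nat) : list nat :=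
  fold_left (fun acc x => if existsb (Nat.eqb x) acc then acc else acc ++ [x])
    l [].

(* roots of the trees of F, listed in increasing order of the smallest label
   of their tree: scanning v = 1..n, the first occurrences of root(v). *)
Definition ordered_roots (n : nat) (F : forest) : list nat :=
  undup_first (map (root_fuel F n) (seq 1 n)).

(* a choice at step i: (a, b, xi) with 1 <= a < b <= i (the 2-subset {a,b})
   and the fair bit xi *)
Definition choice := (nat * nat * bool)%type.

Definition choices (i : nat) : list choice :=
  flat_map (fun b => flat_map (fun a => [(a, b, true); (a, b, false)])
                              (seq 1 (b - 1)))
           (seq 1 i).

(* all choice sequences for steps i, i-1, ..., 2 *)
Fixpoint paths (i : nat) : list (list choice) :=
  match i with
  | O => [nil]
  | S j => match j with
           | O => [nil]
           | S _ => flat_map (fun c => map (cons c) (paths j)) (choices i)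
           end
  end.

(* one coalescence step: trees T_a, T_b (1-based positions, a < b) are
   merged by an edge between their roots, directed towards the root of
   T_a = T_(min(a,b)) if xi = true, towards the root of T_b otherwise. *)
Definition step (n : nat) (F : forest) (c : choice) : forest :=
  let '(a, b, xi) := c in
  let rs := ordered_roots n F in
  let ra := nth (a - 1) rs 0%nat in
  let rb := nth (b - 1) rs 0%nat in
  let child := if xi then rb else ra in
  let par := if xi then ra else rb in
  fun v => if Nat.eqb v child then Some par else F v.

(* F_j, obtained from F_n (no edges) after n - j steps of the path *)
Definition forest_at (n : nat) (p : list choice) (j : nat) : forest :=
  fold_left (step n) (firstn (n - j) p) empty_forest.

Definition h_n (n : nat) (p : list choice) (v : nat) : nat :=
  depth n (forest_at n p 1) v.

Definition ln2_floor (n : nat) : nat := Z.to_nat (Int_part (ln (INR n) ^ 2)).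

Definition h_n1 (n : nat) (p : list choice) (v : nat) : nat :=
  depth n (forest_at n p (ln2_floor n)) v.

Definition h_n2 (n : nat) (p : list choice) (v : nat) : R :=
  INR (h_n n p v) - INR (h_n1 n p v).

Definition prob (n : nat) (E : list choice -> bool) : R :=
  INR (length (filter E (paths n))) / INR (length (paths n)).

Definition Rltb (x y : R) : bool := if Rlt_dec x y then true else false.

(* h_{n,2}(i) counts the steps from F_{floor(ln^2 n)} down to F_1 at which the tree
   containing i is hung below another root.  When j trees remain, only j - 1 of
   the j (j - 1) equally likely choices make a given tree the child, so step t
   contributes probability at most 1/(n - t).  Summing over the last floor(ln^2 n)
   steps bounds E h_{n,2}(i) by ln(ln^2 n) = 2 ln ln n, and Markov's inequality
   gives P(h_{n,2}(i) > eps sqrt(ln n)) <= 2 ln ln n / (eps sqrt(ln n)) -> 0. *)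

From Stdlib Require Import Reals Lra Lia Arith List ZArith.
Import ListNotations.
Open Scope nat_scope.

Fixpoint reaches_root (F : forest) (k v : nat) : Prop :=
  match k with
  | O => F v = None
  | S k' => exists p, F v = Some p /\ reaches_root F k' p
  end.

Lemma depth_fuel_reaches_root F k v fuel :
  reaches_root F k v -> k <= fuel -> depth_fuel F fuel v = k.
Proof.
  revert k v; induction fuel as [|fuel IH]; intros k v Hk Hle.
  - now replace k with 0 by lia.
  - destruct k as [|k]; simpl in Hk |- *.
    + now rewrite Hk.
    + destruct Hk as [p [Hp Hk]]; rewrite Hp; f_equal; apply IH; auto; lia.
Qed.

Lemma root_fuel_reaches_root F k v fuel :
  reaches_root F k v -> k <= fuel -> root_fuel F fuel v = root_fuel F k v.
Proof.
  revert k v; induction fuel as [|fuel IH]; intros k v Hk Hle.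
  - now replace k with 0 by lia.
  - destruct k as [|k]; simpl in Hk |- *.
    + now rewrite Hk.
    + destruct Hk as [p [Hp Hk]]; rewrite Hp; apply IH; auto; lia.
Qed.

Lemma root_fuel_is_root F k v : reaches_root F k v -> F (root_fuel F k v) = None.
Proof.
  revert v; induction k as [|k IH]; intros v Hk; simpl in *; [exact Hk|].
  destruct Hk as [p [Hp Hk]]; rewrite Hp; auto.
Qed.

Definition graft (F : forest) (c p : nat) : forest :=
  fun v => if Nat.eqb v c then Some p else F v.

Lemma reaches_root_graft_away F c p k v :
  F c = None -> reaches_root F k v -> root_fuel F k v <> c ->
  reaches_root (graft F c p) k v /\ root_fuel (graft F c p) k v = root_fuel F k v.
Proof.
  intros Hc; revert v; induction k as [|k IH]; intros v Hk Hv; simpl in *.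
  - unfold graft; destruct (Nat.eqb_spec v c); easy.
  - destruct Hk as [q [Hq Hk]]; rewrite Hq in Hv.
    assert (Hg : graft F c p v = Some q)
      by (unfold graft; destruct (Nat.eqb_spec v c); congruence).
    rewrite Hg, Hq; destruct (IH q Hk Hv) as [H1 H2]; split; [exists q|]; auto.
Qed.

Lemma reaches_root_graft_onto F c p k v :
  F c = None -> F p = None -> c <> p -> reaches_root F k v -> root_fuel F k v = c ->
  reaches_root (graft F c p) (S k) v /\ root_fuel (graft F c p) (S k) v = p.
Proof.
  intros Hc Hp Hcp; revert v; induction k as [|k IH]; intros v Hk Hv; simpl in *.
  - subst v; unfold graft; rewrite Nat.eqb_refl; split; auto.
    exists p; split; auto; destruct (Nat.eqb_spec p c); congruence.
  - destruct Hk as [q [Hq Hk]]; rewrite Hq in Hv.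
    assert (Hg : graft F c p v = Some q)
      by (unfold graft; destruct (Nat.eqb_spec v c); congruence).
    rewrite Hg; destruct (IH q Hk Hv) as [H1 H2]; split; [exists q|]; auto.
Qed.

Definition undup_first_step (acc : list nat) (x : nat) : list nat :=
  if existsb (Nat.eqb x) acc then acc else acc ++ [x].

Lemma existsb_eqb_In x l : existsb (Nat.eqb x) l = true <-> In x l.
Proof.
  rewrite existsb_exists; split.
  - intros [y [Hy E]]; apply Nat.eqb_eq in E; now subst.
  - intros H; exists x; split; auto; apply Nat.eqb_refl.
Qed.

Lemma In_fold_undup_first_step l acc x :
  In x (fold_left undup_first_step l acc) <-> In x acc \/ In x l.
Proof.
  revert acc; induction l as [|y l IH]; intros acc; simpl; [tauto|].
  rewrite IH; unfold undup_first_step at 1.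
  destruct (existsb (Nat.eqb y) acc) eqn:E.
  - apply existsb_eqb_In in E; split; [tauto|]; intros [H|[H|H]]; subst; auto.
  - rewrite in_app_iff; simpl; tauto.
Qed.

Lemma NoDup_fold_undup_first_step l acc :
  NoDup acc -> NoDup (fold_left undup_first_step l acc).
Proof.
  revert acc; induction l as [|y l IH]; intros acc H; simpl; auto.
  apply IH; unfold undup_first_step; destruct (existsb (Nat.eqb y) acc) eqn:E; auto.
  apply NoDup_app; auto.
  - repeat constructor; auto.
  - intros a Ha [Hb|[]]; subst a; apply existsb_eqb_In in Ha; congruence.
Qed.

Lemma In_undup_first l x : In x (undup_first l) <-> In x l.
Proof.
  change (In x (fold_left undup_first_step l []) <-> In x l).
  rewrite In_fold_undup_first_step; simpl; tauto.
Qed.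

Lemma NoDup_undup_first l : NoDup (undup_first l).
Proof. apply NoDup_fold_undup_first_step; constructor. Qed.

Lemma NoDup_length_eq (a b : list nat) :
  NoDup a -> NoDup b -> (forall x, In x a <-> In x b) -> length a = length b.
Proof.
  intros Ha Hb H; apply Nat.le_antisymm; apply NoDup_incl_length; auto; intros x; apply H.
Qed.

Lemma length_remove_NoDup (c : nat) u :
  NoDup u -> In c u -> length (remove Nat.eq_dec c u) = pred (length u).
Proof.
  induction u as [|y u IH]; intros Hn Hi; simpl in *; [contradiction|].
  inversion Hn; subst; destruct (Nat.eq_dec c y).
  - subst; rewrite notin_remove; auto.
  - destruct Hi as [Hi|Hi]; [congruence|]; simpl; rewrite IH; auto.
    destruct u; simpl in *; [contradiction|lia].
Qed.

Lemma NoDup_remove_nat (c : nat) u : NoDup u -> NoDup (remove Nat.eq_dec c u).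
Proof.
  induction u as [|y u IH]; intros Hn; simpl; [constructor|].
  inversion Hn; subst; destruct (Nat.eq_dec c y); auto.
  constructor; auto; intros X; apply in_remove in X; tauto.
Qed.

Definition redirect (c p x : nat) : nat := if Nat.eqb x c then p else x.

Lemma length_undup_first_redirect (l : list nat) c p :
  In c l -> In p l -> c <> p ->
  length (undup_first (map (redirect c p) l)) = pred (length (undup_first l)).
Proof.
  intros Hc Hp Hcp.
  rewrite <- (length_remove_NoDup c); [|apply NoDup_undup_first|now apply In_undup_first].
  apply NoDup_length_eq; [apply NoDup_undup_first|apply NoDup_remove_nat, NoDup_undup_first|].
  intros x; rewrite In_undup_first, in_map_iff; split.
  - intros [y [<- Hy]]; unfold redirect.
    apply in_in_remove; [|apply In_undup_first];
      destruct (Nat.eqb_spec y c); subst; auto; congruence.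
  - intros Hx; apply in_remove in Hx; destruct Hx as [Hx Hxc].
    apply (proj1 (In_undup_first _ _)) in Hx; exists x; split; auto.
    unfold redirect; destruct (Nat.eqb_spec x c); congruence.
Qed.

(* Satisfied by F_{n-m}, the forest after m merges. *)
Definition coalesced (n m : nat) (F : forest) : Prop :=
  (forall v, exists k, k <= m /\ reaches_root F k v) /\
  length (ordered_roots n F) = n - m.

Lemma In_ordered_roots n m F x :
  coalesced n m F -> m <= n -> In x (ordered_roots n F) ->
  F x = None /\ In x (map (root_fuel F n) (seq 1 n)).
Proof.
  intros [Hreach _] Hm Hx; apply (proj1 (In_undup_first _ _)) in Hx; split; auto.
  apply in_map_iff in Hx; destruct Hx as [v [<- _]].
  destruct (Hreach v) as [k [Hk Hv]].
  rewrite (root_fuel_reaches_root _ k) by (auto; lia); eapply root_fuel_is_root; eauto.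
Qed.

Lemma graft_vertex n m F c p v :
  (forall v, exists k, k <= m /\ reaches_root F k v) -> m < n ->
  F c = None -> F p = None -> c <> p ->
  (exists k, k <= S m /\ reaches_root (graft F c p) k v) /\
  root_fuel (graft F c p) n v = redirect c p (root_fuel F n v) /\
  depth n (graft F c p) v = depth n F v + (if Nat.eqb c (root_fuel F n v) then 1 else 0).
Proof.
  intros Hreach Hm Hc Hp Hcp; destruct (Hreach v) as [k [Hk Hv]]; unfold depth, redirect.
  rewrite (root_fuel_reaches_root F k v n Hv), (depth_fuel_reaches_root F k v n Hv) by lia.
  destruct (Nat.eqb_spec (root_fuel F k v) c) as [E|E].
  - destruct (reaches_root_graft_onto F c p k v Hc Hp Hcp Hv E) as [H1 H2].
    rewrite (root_fuel_reaches_root _ (S k) v n H1), (depth_fuel_reaches_root _ (S k) v n H1)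
      by lia.
    rewrite E, Nat.eqb_refl; repeat split; [exists (S k); split|..]; auto; lia.
  - destruct (reaches_root_graft_away F c p k v Hc Hv E) as [H1 H2].
    rewrite (root_fuel_reaches_root _ k v n H1), (depth_fuel_reaches_root _ k v n H1) by lia.
    destruct (Nat.eqb_spec c (root_fuel F k v)); [congruence|].
    repeat split; [exists k; split|..]; auto; lia.
Qed.

Lemma coalesced_graft n m F c p :
  coalesced n m F -> m + 2 <= n -> F c = None -> F p = None -> c <> p ->
  In c (map (root_fuel F n) (seq 1 n)) -> In p (map (root_fuel F n) (seq 1 n)) ->
  coalesced n (S m) (graft F c p) /\
  forall v, depth n (graft F c p) v =
            depth n F v + (if Nat.eqb c (root_fuel F n v) then 1 else 0).
Proof.
  intros [Hreach Hlen] Hm Hc Hp Hcp Hic Hip.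
  pose proof (fun v => graft_vertex n m F c p v Hreach ltac:(lia) Hc Hp Hcp) as G.
  split; [split|].
  - intros v; apply G.
  - unfold ordered_roots.
    replace (map (root_fuel (graft F c p) n) (seq 1 n))
      with (map (redirect c p) (map (root_fuel F n) (seq 1 n)))
      by (rewrite map_map; apply map_ext; intros v; symmetry; apply G).
    rewrite length_undup_first_redirect by auto; unfold ordered_roots in Hlen; lia.
  - intros v; apply G.
Qed.

(* 1-based positions in [ordered_roots] of the child and the parent tree. *)
Definition child_pos (c : choice) : nat := let '(a, b, xi) := c in if xi then b else a.
Definition parent_pos (c : choice) : nat := let '(a, b, xi) := c in if xi then a else b.

Definition child_root (n : nat) (F : forest) (c : choice) : nat :=
  nth (child_pos c - 1) (ordered_roots n F) 0.

Lemma step_graft n F c :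
  step n F c = graft F (child_root n F c) (nth (parent_pos c - 1) (ordered_roots n F) 0).
Proof. now destruct c as [[a b] []]. Qed.

Lemma In_choices j a b xi : In (a, b, xi) (choices j) -> 1 <= a < b /\ b <= j.
Proof.
  unfold choices; rewrite in_flat_map; intros [b' [Hb H]].
  apply in_flat_map in H; destruct H as [a' [Ha H]]; apply in_seq in Hb, Ha.
  destruct H as [H|[H|[]]]; injection H; intros; subst; lia.
Qed.

Lemma coalesced_step n m F c :
  coalesced n m F -> m + 2 <= n -> In c (choices (n - m)) ->
  coalesced n (S m) (step n F c) /\
  forall v, depth n (step n F c) v =
            depth n F v + (if Nat.eqb (child_root n F c) (root_fuel F n v) then 1 else 0).
Proof.
  intros Hco Hm Hc; rewrite step_graft.
  destruct c as [[a b] xi]; apply In_choices in Hc; unfold child_root.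
  set (rs := ordered_roots n F) in *.
  assert (Hlen : length rs = n - m) by apply Hco.
  assert (Ia : In (nth (a - 1) rs 0) rs) by (apply nth_In; lia).
  assert (Ib : In (nth (b - 1) rs 0) rs) by (apply nth_In; lia).
  assert (Nab : nth (a - 1) rs 0 <> nth (b - 1) rs 0).
  { intros E; apply (proj1 (NoDup_nth rs 0)) in E; [lia| apply NoDup_undup_first |lia|lia]. }
  destruct (In_ordered_roots _ _ _ _ Hco ltac:(lia) Ia) as [Ra La].
  destruct (In_ordered_roots _ _ _ _ Hco ltac:(lia) Ib) as [Rb Lb].
  destruct xi; apply coalesced_graft; auto.
Qed.

Lemma coalesced_empty n : coalesced n 0 empty_forest.
Proof.
  split.
  - intros v; exists 0; split; [lia|reflexivity].
  - unfold ordered_roots.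
    replace (map (root_fuel empty_forest n) (seq 1 n)) with (seq 1 n)
      by (rewrite <- map_id at 1; apply map_ext; intros v; now destruct n).
    rewrite Nat.sub_0_r; rewrite <- (length_seq n 1) at 2.
    apply NoDup_length_eq; [apply NoDup_undup_first|apply seq_NoDup|apply In_undup_first].
Qed.

Lemma paths_SS j :
  paths (S (S j)) = flat_map (fun c => map (cons c) (paths (S j))) (choices (S (S j))).
Proof. reflexivity. Qed.

Lemma In_paths_cons j q : 2 <= j -> In q (paths j) ->
  exists c q', q = c :: q' /\ In c (choices j) /\ In q' (paths (j - 1)).
Proof.
  intros Hj H; destruct j as [|[|j]]; try lia.
  rewrite paths_SS, in_flat_map in H; destruct H as [c [Hc H]].
  apply in_map_iff in H; destruct H as [q' [<- H]].
  exists c, q'; replace (S (S j) - 1) with (S j) by lia; auto.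
Qed.

Lemma length_In_paths j q : In q (paths j) -> length q = j - 1.
Proof.
  revert q; induction j as [|j IH]; intros q H.
  - destruct H as [<-|[]]; reflexivity.
  - destruct j as [|j]; [destruct H as [<-|[]]; reflexivity|].
    destruct (In_paths_cons (S (S j)) q ltac:(lia) H) as [c [q' [-> [_ H']]]].
    simpl; rewrite (IH q'); [lia|]; now replace (S (S j) - 1) with (S j) in H' by lia.
Qed.

Lemma list_sum_map_const {A} (l : list A) k : list_sum (map (fun _ => k) l) = length l * k.
Proof. induction l as [|x l IH]; simpl; lia. Qed.

Lemma length_choices j : length (choices j) = j * (j - 1).
Proof.
  unfold choices; rewrite length_flat_map.
  induction j as [|j IH]; [reflexivity|].
  rewrite seq_S, map_app, list_sum_app, IH; simpl.
  rewrite length_flat_map, (map_ext _ (fun _ => 2)) by reflexivity.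
  rewrite list_sum_map_const, length_seq; nia.
Qed.

Lemma length_paths_SS j :
  length (paths (S (S j))) = S (S j) * S j * length (paths (S j)).
Proof.
  rewrite paths_SS, length_flat_map, (map_ext _ (fun _ => length (paths (S j))))
    by (intros; apply length_map).
  rewrite list_sum_map_const, length_choices; now replace (S (S j) - 1) with (S j) by lia.
Qed.

Lemma length_paths_pos j : 0 < length (paths j).
Proof.
  induction j as [|j IH]; [simpl; lia|]; destruct j as [|j]; [simpl; lia|].
  rewrite length_paths_SS; nia.
Qed.

Definition run (n : nat) (F : forest) (q : list choice) (t : nat) : forest :=
  fold_left (step n) (firstn t q) F.

Definition hits (n i : nat) (F : forest) (q : list choice) (t : nat) : bool :=
  match nth_error q t with
  | Some c => Nat.eqb (child_root n (run n F q t) c) (root_fuel (run n F q t) n i)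
  | None => false
  end.

Lemma coalesced_run n t j F q :
  coalesced n (n - j) F -> j <= n -> In q (paths j) -> t < j ->
  coalesced n (n - j + t) (run n F q t) /\
  (t + 1 < j -> exists c, nth_error q t = Some c /\ In c (choices (j - t))).
Proof.
  revert j F q; induction t as [|t IH]; intros j F q Hco Hj Hq Ht.
  - rewrite Nat.add_0_r; split; [exact Hco|]; intros Hj2.
    destruct (In_paths_cons j q ltac:(lia) Hq) as [c [q' [-> [Hc _]]]].
    exists c; rewrite Nat.sub_0_r; auto.
  - destruct (In_paths_cons j q ltac:(lia) Hq) as [c [q' [-> [Hc Hq']]]].
    assert (Hco' : coalesced n (n - (j - 1)) (step n F c)).
    { replace (n - (j - 1)) with (S (n - j)) by lia.
      apply (coalesced_step n (n - j) F c Hco); [lia|]; now replace (n - (n - j)) with j by lia. }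
    destruct (IH (j - 1) (step n F c) q' Hco' ltac:(lia) Hq' ltac:(lia)) as [A B]; split.
    + now replace (n - j + S t) with (n - (j - 1) + t) by lia.
    + intros Hj2; destruct (B ltac:(lia)) as [c' [E1 E2]]; exists c'; split; auto.
      now replace (j - S t) with (j - 1 - t) by lia.
Qed.

Lemma firstn_S_nth_error {A} (q : list A) t c :
  nth_error q t = Some c -> firstn (S t) q = firstn t q ++ [c].
Proof.
  revert t; induction q as [|x q IH]; intros t H; destruct t; simpl in *; try discriminate.
  - now injection H as ->.
  - f_equal; auto.
Qed.

Definition b2n (b : bool) : nat := if b then 1 else 0.

Lemma depth_run_S n i q t : In q (paths n) -> t + 1 < n ->
  depth n (run n empty_forest q (S t)) i =
  depth n (run n empty_forest q t) i + b2n (hits n i empty_forest q t).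
Proof.
  intros Hq Ht.
  assert (Hco : coalesced n (n - n) empty_forest) by (rewrite Nat.sub_diag; apply coalesced_empty).
  destruct (coalesced_run n t n empty_forest q Hco (le_n n) Hq ltac:(lia)) as [A B].
  destruct (B Ht) as [c [E Hc]]; rewrite Nat.sub_diag in A.
  unfold hits, run; rewrite E, (firstn_S_nth_error q t c E), fold_left_app; simpl.
  destruct (coalesced_step n t _ c A ltac:(lia) Hc) as [_ D]; apply D.
Qed.

Lemma depth_run_add n i q s L : In q (paths n) -> s + L + 1 <= n ->
  depth n (run n empty_forest q (s + L)) i =
  depth n (run n empty_forest q s) i +
  list_sum (map (fun t => b2n (hits n i empty_forest q t)) (seq s L)).
Proof.
  intros Hq; induction L as [|L IH]; intros HL; [simpl; now rewrite !Nat.add_0_r|].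
  rewrite seq_S, map_app, list_sum_app, Nat.add_succ_r, depth_run_S, IH by (auto; lia).
  simpl; lia.
Qed.

(* Steps [n - ln2_floor n, ..., n - 2] lead from F_{ln2_floor n} to F_1. *)
Definition late_hits (n i : nat) (q : list choice) : nat :=
  list_sum (map (fun t => b2n (hits n i empty_forest q t))
                (seq (n - ln2_floor n) (n - 1 - (n - ln2_floor n)))).

Lemma h_n2_late_hits n i q :
  1 <= n -> In q (paths n) -> h_n2 n q i = INR (late_hits n i q).
Proof.
  intros Hn Hq; unfold h_n2, h_n, h_n1, late_hits.
  change (forest_at n q 1) with (run n empty_forest q (n - 1)).
  change (forest_at n q (ln2_floor n)) with (run n empty_forest q (n - ln2_floor n)).
  set (s := n - ln2_floor n).
  destruct (le_lt_dec s (n - 1)) as [Hs|Hs].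
  - replace (n - 1) with (s + (n - 1 - s)) at 1 by lia.
    rewrite depth_run_add, plus_INR by (auto; lia); ring.
  - replace (n - 1 - s) with 0 by lia.
    assert (E : run n empty_forest q s = run n empty_forest q (n - 1)).
    { unfold run; pose proof (length_In_paths n q Hq); now rewrite !firstn_all2 by lia. }
    rewrite E; simpl; ring.
Qed.

Lemma choices_S j :
  choices (S j) = choices j ++ flat_map (fun a => [(a, S j, true); (a, S j, false)]) (seq 1 j).
Proof.
  unfold choices at 1; rewrite seq_S, flat_map_app; simpl.
  now rewrite app_nil_r, Nat.sub_0_r.
Qed.

Lemma count_choices_child_pos (e : nat -> bool) j :
  length (filter (fun c => e (child_pos c)) (choices j)) =
  (j - 1) * length (filter e (seq 1 j)).
Proof.
  assert (Hcol : forall b l,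
    length (filter (fun c => e (child_pos c))
                   (flat_map (fun a => [(a, b, true); (a, b, false)]) l)) =
    length l * b2n (e b) + length (filter e l)).
  { intros b l; induction l as [|a l IH]; simpl; auto.
    unfold b2n in *; destruct (e a), (e b); simpl; rewrite IH; lia. }
  induction j as [|j IH]; [reflexivity|].
  rewrite choices_S, filter_app, length_app, IH, Hcol, length_seq.
  rewrite seq_S, filter_app, length_app; simpl.
  destruct j as [|j]; unfold b2n; destruct (e _); simpl; nia.
Qed.

Lemma map_nth_pred_seq1 (rs : list nat) :
  map (fun x => nth (x - 1) rs 0) (seq 1 (length rs)) = rs.
Proof.
  induction rs as [|y rs IH]; [reflexivity|].
  simpl length; rewrite <- cons_seq; simpl map; f_equal.
  rewrite <- seq_shift, map_map; rewrite <- IH at 2; apply map_ext_in.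
  intros [|x] Hx; apply in_seq in Hx; [lia|]; simpl; now rewrite Nat.sub_0_r.
Qed.

Lemma length_filter_eqb_NoDup (rs : list nat) r :
  NoDup rs -> length (filter (fun z => Nat.eqb z r) rs) <= 1.
Proof.
  intros Hnd; rewrite (NoDup_count_occ Nat.eq_dec) in Hnd; specialize (Hnd r).
  enough (E : length (filter (fun z => Nat.eqb z r) rs) = count_occ Nat.eq_dec rs r) by lia.
  clear Hnd; induction rs as [|y rs IH]; simpl; auto.
  destruct (Nat.eqb_spec y r), (Nat.eq_dec y r); simpl; congruence.
Qed.

Lemma count_choices_child_root (rs : list nat) r :
  NoDup rs ->
  length (filter (fun c => Nat.eqb (nth (child_pos c - 1) rs 0) r) (choices (length rs)))
  <= length rs - 1.
Proof.
  intros Hnd; rewrite (count_choices_child_pos (fun x => Nat.eqb (nth (x - 1) rs 0) r)).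
  enough (length (filter (fun x => Nat.eqb (nth (x - 1) rs 0) r) (seq 1 (length rs))) <= 1)
    by nia.
  pose proof (filter_map_swap (fun z => Nat.eqb z r) (fun x => nth (x - 1) rs 0)
                              (seq 1 (length rs))) as E.
  rewrite map_nth_pred_seq1 in E; apply (f_equal (@length nat)) in E.
  rewrite length_map in E; rewrite <- E; now apply length_filter_eqb_NoDup.
Qed.

Lemma length_filter_paths_SS (f : list choice -> bool) j :
  length (filter f (paths (S (S j)))) =
  list_sum (map (fun c => length (filter (fun q => f (c :: q)) (paths (S j))))
                (choices (S (S j)))).
Proof.
  rewrite paths_SS; generalize (choices (S (S j))) (paths (S j)).
  intros C P; induction C as [|c C IH]; [reflexivity|]; cbn [flat_map map list_sum].
  now rewrite filter_app, length_app, IH, filter_map_swap, length_map.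
Qed.

Lemma list_sum_map_le_mul {A} (h : A -> nat) w K (C : list A) :
  (forall c, In c C -> h c * w <= K) -> list_sum (map h C) * w <= length C * K.
Proof.
  induction C as [|c C IH]; intros H; simpl; auto.
  pose proof (H c (or_introl eq_refl)).
  assert (list_sum (map h C) * w <= length C * K) by (apply IH; intros; apply H; simpl; auto).
  lia.
Qed.

Lemma length_filter_const {A} (b : bool) (l : list A) :
  length (filter (fun _ => b) l) = b2n b * length l.
Proof. induction l as [|x l IH]; simpl; [lia|]; destruct b; simpl in *; lia. Qed.

Lemma list_sum_map_b2n_mul {A} (g : A -> bool) K (C : list A) :
  list_sum (map (fun c => b2n (g c) * K) C) = length (filter g C) * K.
Proof. induction C as [|c C IH]; simpl; auto; rewrite IH; destruct (g c); simpl; lia. Qed.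

Lemma count_hits_first n i F j :
  coalesced n (n - S (S j)) F -> S (S j) <= n ->
  length (filter (fun q => hits n i F q 0) (paths (S (S j)))) * S (S j)
  <= length (paths (S (S j))).
Proof.
  intros Hco Hj.
  set (rs := ordered_roots n F).
  set (g := fun c => Nat.eqb (nth (child_pos c - 1) rs 0) (root_fuel F n i)).
  rewrite length_filter_paths_SS, length_paths_SS.
  rewrite (map_ext _ (fun c => b2n (g c) * length (paths (S j))))
    by (intros c; exact (length_filter_const (g c) _)).
  rewrite list_sum_map_b2n_mul.
  assert (Hlen : length rs = S (S j)) by (destruct Hco as [_ E]; unfold rs; rewrite E; lia).
  pose proof (count_choices_child_root rs (root_fuel F n i) (NoDup_undup_first _)) as Hc.
  rewrite Hlen in Hc; fold g in Hc; replace (S (S j) - 1) with (S j) in Hc by lia.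
  nia.
Qed.

(* Conditioning on the first choice reduces step [t + 1] to step [t] of the
   coalescent restarted from the merged forest. *)
Lemma count_hits n i t j F :
  coalesced n (n - j) F -> j <= n -> t + 1 < j ->
  length (filter (fun q => hits n i F q t) (paths j)) * (j - t) <= length (paths j).
Proof.
  revert j F; induction t as [|t IH]; intros j F Hco Hj Ht; destruct j as [|[|j]]; try lia.
  - rewrite Nat.sub_0_r; now apply count_hits_first.
  - rewrite length_filter_paths_SS.
    replace (length (paths (S (S j))))
      with (length (choices (S (S j))) * length (paths (S j)))
      by (rewrite length_paths_SS, length_choices; simpl; lia).
    apply list_sum_map_le_mul; intros c Hc.
    change (length (filter (fun q => hits n i (step n F c) q t) (paths (S j))) * (S j - t)
            <= length (paths (S j))).
    apply IH; [|lia|lia].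
    replace (n - S j) with (S (n - S (S j))) by lia.
    apply (coalesced_step n _ F c Hco); [lia|].
    now replace (n - (n - S (S j))) with (S (S j)) by lia.
Qed.

Lemma list_sum_b2n_swap {A B} (f : A -> B -> bool) (P : list A) (T : list B) :
  list_sum (map (fun p => list_sum (map (fun t => b2n (f p t)) T)) P) =
  list_sum (map (fun t => length (filter (fun p => f p t) P)) T).
Proof.
  induction P as [|p P IH]; simpl.
  - induction T as [|t T IHT]; simpl; auto.
  - rewrite IH; clear IH; induction T as [|t T IHT]; simpl; auto.
    rewrite <- IHT; destruct (f p t); simpl; lia.
Qed.

Open Scope R_scope.

Lemma INR_list_sum_le {A} (h : A -> nat) (g : A -> R) K (T : list A) :
  (forall t, In t T -> INR (h t) <= K * g t) ->
  INR (list_sum (map h T)) <= K * fold_right Rplus 0 (map g T).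
Proof.
  induction T as [|t T IH]; intros H; simpl; [lra|].
  rewrite plus_INR; pose proof (H t (or_introl eq_refl)).
  assert (INR (list_sum (map h T)) <= K * fold_right Rplus 0 (map g T))
    by (apply IH; intros; apply H; simpl; auto).
  lra.
Qed.

Lemma ln_le_ln x y : 0 < x -> x <= y -> ln x <= ln y.
Proof.
  intros Hx [Hxy|<-]; [left; now apply ln_increasing|lra].
Qed.

Lemma inv_succ_le_ln_diff m : 1 <= m -> 1 / (m + 1) <= ln (m + 1) - ln m.
Proof.
  intros Hm.
  assert (Hq : 0 < m / (m + 1)) by (apply Rdiv_lt_0_compat; lra).
  assert (Hl : ln m = ln (m + 1) + ln (m / (m + 1))).
  { rewrite <- ln_mult by lra; f_equal; field; lra. }
  assert (Hb : m / (m + 1) <= exp (- (1 / (m + 1)))).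
  { pose proof (exp_ineq1_le (- (1 / (m + 1)))).
    replace (m / (m + 1)) with (1 + - (1 / (m + 1))) by (field; lra); lra. }
  apply ln_le_ln in Hb; auto; rewrite ln_exp in Hb; lra.
Qed.

(* The sum runs over 1/(L+1), ..., 1/2. *)
Lemma harmonic_le_ln L s n : (n - s = S L)%nat ->
  fold_right Rplus 0 (map (fun t => 1 / INR (n - t)) (seq s L)) <= ln (INR (S L)).
Proof.
  revert s; induction L as [|L IH]; intros s H; cbn [seq map fold_right].
  - change (INR 1) with 1; rewrite ln_1; lra.
  - rewrite H; pose proof (IH (S s) ltac:(lia)).
    pose proof (inv_succ_le_ln_diff (INR (S L)) ltac:(apply (le_INR 1); lia)).
    rewrite <- S_INR in *; lra.
Qed.

Lemma markov_count {A} (P : list A) (E : A -> bool) (N : A -> nat) x : 0 <= x ->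
  (forall p, In p P -> E p = true -> x < INR (N p)) ->
  INR (length (filter E P)) * x <= INR (list_sum (map N P)).
Proof.
  intros Hx; induction P as [|p P IH]; intros H; cbn [filter length map list_sum]; [simpl; lra|].
  change (list_sum (N p :: map N P)) with (N p + list_sum (map N P))%nat; rewrite plus_INR; pose proof (IH (fun q Hq => H q (or_intror Hq))).
  destruct (E p) eqn:Ep; cbn [length].
  - rewrite S_INR; pose proof (H p (or_introl eq_refl) Ep); lra.
  - pose proof (pos_INR (N p)); lra.
Qed.

Lemma sum_late_hits_le n i :
  INR (list_sum (map (late_hits n i) (paths n))) <=
  INR (length (paths n)) * ln (INR (S (n - 1 - (n - ln2_floor n)))).
Proof.
  set (s := (n - ln2_floor n)%nat); set (L := (n - 1 - s)%nat).
  apply Rle_trans with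
    (INR (length (paths n)) * fold_right Rplus 0 (map (fun t => 1 / INR (n - t)) (seq s L))).
  - unfold late_hits; fold s L; rewrite list_sum_b2n_swap.
    apply INR_list_sum_le; intros t Ht; apply in_seq in Ht.
    pose proof (count_hits n i t n empty_forest) as C.
    rewrite Nat.sub_diag in C; specialize (C (coalesced_empty n) (le_n n) ltac:(lia)).
    apply le_INR in C; rewrite mult_INR in C.
    assert (0 < INR (n - t)) by (apply lt_0_INR; lia).
    apply (Rmult_le_reg_r (INR (n - t))); auto.
    unfold Rdiv; rewrite Rmult_1_l, Rmult_assoc, Rinv_l by lra; lra.
  - apply Rmult_le_compat_l; [apply pos_INR|].
    destruct L as [|L'] eqn:EL.
    + simpl; rewrite ln_1; lra.
    + apply harmonic_le_ln; unfold L in EL; lia.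
Qed.

Lemma prob_h_n2_gt_le n i x : (1 <= n)%nat -> 0 < x ->
  prob n (fun p => Rltb x (Rabs (h_n2 n p i))) <=
  ln (INR (S (n - 1 - (n - ln2_floor n)))) / x.
Proof.
  intros Hn Hx; unfold prob.
  set (P := paths n); set (E := fun p => Rltb x (Rabs (h_n2 n p i))).
  assert (HP : 0 < INR (length P)) by apply lt_0_INR, length_paths_pos.
  assert (M : INR (length (filter E P)) * x <= INR (list_sum (map (late_hits n i) P))).
  { apply markov_count; [lra|]; intros p Hp Ep; unfold E, Rltb in Ep.
    destruct (Rlt_dec x (Rabs (h_n2 n p i))) as [H|H]; [|discriminate].
    rewrite h_n2_late_hits, Rabs_pos_eq in H by (auto using pos_INR); exact H. }
  pose proof (sum_late_hits_le n i) as Hsum; fold P in Hsum.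
  set (l := ln _) in *.
  apply (Rmult_le_reg_r (INR (length P) * x)); [nra|].
  replace (INR (length (filter E P)) / INR (length P) * (INR (length P) * x))
    with (INR (length (filter E P)) * x) by (field; lra).
  replace (l / x * (INR (length P) * x)) with (INR (length P) * l) by (field; lra).
  lra.
Qed.

(* With z = y^(1/4): 2 ln y / sqrt y = 8 ln z / z^2 < 8 / z, and z > 8 / (eps d). *)
Lemma two_ln_div_sqrt_lt eps d y : 0 < eps -> 0 < d -> (8 / (eps * d) + 1) ^ 4 < y ->
  2 * ln y / (eps * sqrt y) < d.
Proof.
  intros He Hd Hy.
  set (t := 8 / (eps * d)) in *.
  assert (Ht : eps * d * t = 8) by (unfold t; field; lra).
  assert (Ht0 : 0 < t) by (unfold t; apply Rdiv_lt_0_compat; nra).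
  assert (Hy0 : 0 < y) by (pose proof (pow_lt (t + 1) 4 ltac:(lra)); lra).
  set (z := sqrt (sqrt y)).
  assert (Hsy : 0 < sqrt y) by (apply sqrt_lt_R0; lra).
  assert (Hz0 : 0 < z) by (apply sqrt_lt_R0; lra).
  assert (Hzz : z * z = sqrt y) by (apply sqrt_sqrt; lra).
  assert (Hyy : sqrt y * sqrt y = y) by (apply sqrt_sqrt; lra).
  assert (Htz : t + 1 < z).
  { assert (A : (t + 1) * (t + 1) < sqrt y).
    { rewrite <- (sqrt_pow2 ((t + 1) * (t + 1))) by nra.
      apply sqrt_lt_1_alt; split; [nra|]; replace (((t + 1) * (t + 1)) ^ 2) with ((t + 1) ^ 4)
        by ring; lra. }
    unfold z; rewrite <- (sqrt_pow2 (t + 1)) by lra.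
    apply sqrt_lt_1_alt; split; [nra|]; simpl; lra. }
  assert (Hln : ln y = 4 * ln z).
  { replace y with (z ^ 4) at 1 by (simpl; nra); rewrite ln_pow by lra; simpl; ring. }
  assert (Hlz : ln z < z).
  { pose proof (exp_ineq1_le z); rewrite <- (ln_exp z) at 2; apply ln_increasing; lra. }
  assert (Hedz : 8 < eps * d * z) by nra.
  rewrite Hln, <- Hzz.
  apply (Rmult_lt_reg_r (eps * (z * z))); [nra|].
  unfold Rdiv; rewrite Rmult_assoc, Rinv_l by nra; nra.
Qed.

Lemma INR_ln2_floor_le n : 1 <= ln (INR n) -> INR (ln2_floor n) <= ln (INR n) ^ 2.
Proof.
  intros H; unfold ln2_floor; set (w := ln (INR n) ^ 2).
  assert (Hw : 1 <= w) by (unfold w; nra).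
  destruct (base_Int_part w) as [A B].
  assert (Hz : (0 < Int_part w)%Z) by (apply lt_IZR; simpl; lra).
  rewrite INR_IZR_INZ, Z2Nat.id by lia; exact A.
Qed.

Lemma ln_late_window_le n : 1 <= ln (INR n) ->
  ln (INR (S (n - 1 - (n - ln2_floor n)))) <= 2 * ln (ln (INR n)).
Proof.
  intros H; set (y := ln (INR n)) in *.
  replace (2 * ln y) with (ln (y ^ 2)) by (rewrite ln_pow by lra; simpl; ring).
  apply ln_le_ln; [apply lt_0_INR; lia|].
  destruct (Nat.le_gt_cases (S (n - 1 - (n - ln2_floor n))) 1) as [C|C].
  - apply le_INR in C; simpl in C |- *; nra.
  - pose proof (INR_ln2_floor_le n H).
    assert (S (n - 1 - (n - ln2_floor n)) <= ln2_floor n)%nat by lia.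
    apply le_INR in H1; fold y in H0; lra.
Qed.

Lemma ln_INR_eventually_gt Y :
  exists N, forall n, (N <= n)%nat -> (1 <= n)%nat /\ Y < ln (INR n).
Proof.
  destruct (archimed (exp Y)) as [Hup _]; pose proof (exp_pos Y).
  exists (Z.to_nat (up (exp Y))); intros n Hn.
  assert (Hup0 : (0 <= up (exp Y))%Z) by (apply le_IZR; simpl; lra).
  apply le_INR in Hn; rewrite INR_IZR_INZ, Z2Nat.id in Hn by lia; split.
  - destruct n; [simpl in Hn; lra|lia].
  - rewrite <- (ln_exp Y); apply ln_increasing; lra.
Qed.

Lemma prob_nonneg n E : 0 <= prob n E.
Proof.
  unfold prob, Rdiv; apply Rmult_le_pos; [apply pos_INR|].
  left; apply Rinv_0_lt_compat, lt_0_INR, length_paths_pos.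
Qed.

Theorem lemma5p2 (i : nat) (hi : (1 <= i)%nat) :
  forall eps : R, 0 < eps ->
  Un_cv (fun n : nat =>
           prob n (fun p => Rltb (eps * sqrt (ln (INR n))) (Rabs (h_n2 n p i))))
        0.
Proof.
  intros eps He d Hd.
  destruct (ln_INR_eventually_gt ((8 / (eps * d) + 1) ^ 4 + 1)) as [N HN].
  exists N; intros n Hn; destruct (HN n Hn) as [Hn1 Hy].
  assert (Hpow : 0 <= (8 / (eps * d) + 1) ^ 4)
    by (apply pow_le; pose proof (Rdiv_lt_0_compat 8 (eps * d) ltac:(lra) ltac:(nra)); lra).
  set (y := ln (INR n)) in *.
  assert (Hx : 0 < eps * sqrt y) by (apply Rmult_lt_0_compat, sqrt_lt_R0; lra).
  unfold R_dist; rewrite Rminus_0_r, Rabs_pos_eq by apply prob_nonneg.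
  eapply Rle_lt_trans; [apply (prob_h_n2_gt_le n i _ Hn1 Hx)|].
  eapply Rle_lt_trans; [|apply (two_ln_div_sqrt_lt eps d y); lra].
  apply Rmult_le_compat_r; [left; apply Rinv_0_lt_compat; lra|].
  apply ln_late_window_le; fold y; lra.
Qed.
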